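(* Consider a substrate edge $(u,v)\in E_S$. Let $0<\varepsilon\le1$ be such that $d_{\max}(r,u,v)/d_S(u,v)\le\varepsilon$ for all $r\in\mathcal R$. Let $\Delta=\sum_{r\in\mathcal R}\big(A_{\max}(r,u,v)/d_{\max}(r,u,v)\big)^2$ and $\gamma=1+\varepsilon\sqrt{2\Delta\log|V_S|}$. Then $\mathbb P\big(A_{u,v}\ge\gamma\cdot d_S(u,v)\big)\le|V_S|^{-4}$.
   Context: Substrate: directed graph $G_S=(V_S,E_S)$, node types $\mathcal T$, $V_S^\tau\subseteq V_S$, resources $R_S=\{(\tau,u):u\in V_S^\tau\}\cup E_S$, capacities $d_S(x,y)>0$. Requests $r\in\mathcal R$: directed graph $G_r=(V_r,E_r)$, types $\tau_r$, demands $d_r(i),d_r(i,j)\ge0$, allowed node sets $V_S^{r,i}\subseteq V_S^{\tau_r(i)}$, allowed edge sets $E_S^{r,i,j}\subseteq E_S$. Valid mappings $m_r$ (nodes to allowed nodes, each edge $(i,j)$ to a directed path between the images within $E_S^{r,i,j}$), set $\mathcal M_r$; allocation $A(m_r,u,v)=\sum_{(i,j):(u,v)\in m^E_r(i,j)}d_r(i,j)$ for edges and $A(m_r,\tau,u)=\sum_{i:\tau_r(i)=\tau,m_r^V(i)=u}d_r(i)$ for node resources; $d_{\max}(r,u,v)=\max_{(i,j)\in E_r:(u,v)\in E_S^{r,i,j}}d_r(i,j)$; $A_{\max}(r,u,v)=\max_{m\in\mathcal M_r}A(m,u,v)$. Rounding setting (profit variant): for each request $r$ a finite family $\mathcal D_r=\{(f^k_r,m^k_r)\}_k$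 with $f^k_r>0$, $m^k_r\in\mathcal M_r$, $\sum_kf^k_r\le1$, obtained by decomposing a feasible solution of the paper's decomposable LP relaxation of the VNEP, so that in particular $\sum_r\sum_kf^k_rA(m^k_r,x,y)\le d_S(x,y)$ for all resources $(x,y)$. Independently for each $r$, $m^k_r$ is selected with probability $f^k_r$ and nothing with probability $1-\sum_kf^k_r$; $A_{u,v}$ is the total allocation of the selected mappings on $(u,v)$. *)

From HB Require Import structures.
From mathcomp Require Import all_boot all_order all_algebra.
From mathcomp Require Import boolp reals exp.
Set Implicit Arguments. Unset Strict Implicit. Unset Printing Implicit Defensive.
Import Order.TTheory GRing.Theory Num.Theory.
Local Open Scope ring_scope.

Record request (VS Ty : finType) (R : realType) := Request {
  vnode : finType;
  vedge : rel vnode;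
  vtype : vnode -> Ty;
  dnode : vnode -> R;
  dedge : vnode -> vnode -> R;
  allowedV : vnode -> {set VS};
  allowedE : vnode -> vnode -> {set VS * VS}
}.

Arguments vnode {VS Ty R} r.
Arguments vedge {VS Ty R} r.
Arguments vtype {VS Ty R} r.
Arguments dnode {VS Ty R} r.
Arguments dedge {VS Ty R} r.
Arguments allowedV {VS Ty R} r.
Arguments allowedE {VS Ty R} r.

Section Defs.
Variables (VS Ty : finType) (R : realType).

Definition wf_request (VT : Ty -> {set VS}) (ES : rel VS) (rq : request VS Ty R) : Prop :=
  [/\ forall i, 0 <= dnode rq i,
      forall i j, 0 <= dedge rq i j,
      forall i, allowedV rq i \subset VT (vtype rq i) &
      forall i j a b, (a, b) \in allowedE rq i j -> ES a b].

Definition mapping (rq : request VS Ty R) : finType :=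
  ({ffun vnode rq -> VS} * {ffun (vnode rq * vnode rq) -> {set VS * VS}})%type.

Definition is_path_in (F : {set VS * VS}) (s t : VS) (P : {set VS * VS}) : Prop :=
  exists p : seq VS,
    [/\ path (fun a b => (a, b) \in F) s p, last s p = t, uniq (s :: p)
      & P = [set e in zip (s :: p) p]].

Definition valid_mapping (rq : request VS Ty R) (m : mapping rq) : Prop :=
  (forall i, m.1 i \in allowedV rq i) /\
  (forall i j, vedge rq i j -> is_path_in (allowedE rq i j) (m.1 i) (m.1 j) (m.2 (i, j))).

Definition alloc_edge (rq : request VS Ty R) (m : mapping rq) (u v : VS) : R :=
  \sum_(p : vnode rq * vnode rq | vedge rq p.1 p.2 && ((u, v) \in m.2 p)) dedge rq p.1 p.2.

Definition alloc_node (rq : request VS Ty R) (m : mapping rq) (tau : Ty) (u : VS) : R :=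
  \sum_(i : vnode rq | (vtype rq i == tau) && (m.1 i == u)) dnode rq i.

(* d_max(r, u, v); the maximum over an empty index set is 0. *)
Definition dmax (rq : request VS Ty R) (u v : VS) : R :=
  \big[Num.max/0]_(p : vnode rq * vnode rq |
      vedge rq p.1 p.2 && ((u, v) \in allowedE rq p.1 p.2)) dedge rq p.1 p.2.

(* A_max(r, u, v) = max over valid mappings (0 if there is none). *)
Definition Amax (rq : request VS Ty R) (u v : VS) : R :=
  \big[Num.max/0]_(m : mapping rq | `[< valid_mapping m >]) alloc_edge m u v.

(* Probability of the outcome w of the independent randomized rounding:
   w r = Some k : mapping m r k selected (k in the family index set Kr r);
   w r = None : nothing selected for r. *)
Definition outcome_weight (Req K : finType) (Kr : Req -> {set K}) (f : Req -> K -> R)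
    (w : {ffun Req -> option K}) : R :=
  \prod_(r : Req) match w r with
                  | Some k => if k \in Kr r then f r k else 0
                  | None => 1 - \sum_(k in Kr r) f r k
                  end.

Definition rounded_alloc (Req K : finType) (req : Req -> request VS Ty R)
    (m : forall r, K -> mapping (req r)) (w : {ffun Req -> option K}) (u v : VS) : R :=
  \sum_(r : Req) match w r with
                 | Some k => alloc_edge (m r k) u v
                 | None => 0
                 end.

End Defs.

(* Under the independent rounding, A_{u,v} is a sum over the requests r of independent
   variables with values in [0, A_max(r,u,v)], whose means add up to at most d_S(u,v) by
   the capacity constraint of the LP.  Hoeffding's inequality bounds the probability of
   exceeding the mean by t with exp (-2 t^2 / C), C = sum_r A_max(r,u,v)^2, and
   d_max(r,u,v) <= eps d_S(u,v) gives C <= (eps d_S(u,v))^2 Delta; for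
   t = (gamma - 1) d_S(u,v) the exponent is then at least 4 ln |V_S|.
   Hoeffding's inequality follows from the exponential Markov inequality and Hoeffding's
   lemma E[e^(lX)] <= e^(l E[X] + l^2 c^2 / 8) for X in [0, c], which the convexity of
   exp reduces to a two-point distribution. *)

From HB Require Import structures.
From mathcomp Require Import all_boot all_order all_algebra.
From mathcomp Require Import boolp reals exp.
From mathcomp Require Import interval_inference normedtype sequences derive realfun convex.
From mathcomp Require Import ring lra.
Set Implicit Arguments. Unset Strict Implicit. Unset Printing Implicit Defensive.
Import Order.TTheory GRing.Theory Num.Theory numFieldNormedType.Exports.
Local Open Scope ring_scope.

Section HoeffdingLemma.
Variable R : realType.

(* [tanh (s / 2) <= s / 2]: the difference has derivative [e^s (s - 1) + 1 >= 0]. *)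
Lemma tanh_half_le (s : R) : 0 <= s -> 2 * (expR s - 1) <= s * (expR s + 1).
Proof.
move=> s0; pose T (y : R) := y * (expR y + 1) - 2 * (expR y - 1).
have dT (x : R) : is_derive x 1 T (x * expR x + (expR x + 1) - 2 * expR x).
  by apply: is_derive_eq; rewrite addr0 subr0 [_%:A]mulr1.
suff : T 0 <= T s by rewrite /T expR0 mul0r subrr mulr0 subrr subr_ge0.
apply: (@ger0_derive1_ndecry R T 0) => //.
- move=> x _; rewrite derive1E; have [_ ->] := dT x.
  have := expR_ge1Dx (- x); rewrite expRN => /(ler_wpM2l (ltW (expR_gt0 x))).
  by rewrite mulfV ?gt_eqF ?expR_gt0 //; lra.
- by apply: derivable_within_continuous => x _; case: (dT x).
Qed.

Lemma two_point_mgf_deriv_le0 (q x : R) : 0 <= q <= 1 -> 0 <= x ->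
  q * expR x - (q + x / 4) * (1 - q + q * expR x) <= 0.
Proof.
move=> /andP[q0 q1] x0; set s := x / 2; set y := expR s.
have ex : expR x = y * y by rewrite -expRD /s -splitr.
have s0 : 0 <= s by rewrite /s; lra.
have y1 : 1 <= y by rewrite /y -expR0 ler_expR.
have tanh := tanh_half_le s0; rewrite -/y in tanh.
rewrite ex; set S := 1 - q + q * (y * y).
have S0 : 0 <= S by rewrite /S; nra.
(* [S - q (1 - q) (y + 1)^2 = (1 - q (y + 1))^2] *)
have amgm : q * (1 - q) * (y + 1) ^+ 2 <= S.
  by have := sqr_ge0 (1 - q * (y + 1)); rewrite /S; lra.
have claim_y : 2 * q * (1 - q) * (y * y - 1) <= s * S.
  rewrite -(ler_pM2l (_ : 0 < y + 1)); last lra.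
  have y1_ge0 : 0 <= 2 * (y - 1) by lra.
  have := ler_wpM2r S0 tanh; have := ler_wpM2l y1_ge0 amgm.
  lra.
rewrite /s /S in claim_y *; lra.
Qed.

(* Hoeffding's lemma for a two-point distribution; the ratio [H] of the two sides is
   nonincreasing in [h]. *)
Lemma two_point_mgf_le (q h : R) : 0 <= q <= 1 -> 0 <= h ->
  1 - q + q * expR h <= expR (q * h + h ^+ 2 / 8).
Proof.
move=> q01 h0.
pose H (z : R) := (1 - q + q * expR z) * expR (- (q * z + z ^+ 2 / 8)).
have dH (x : R) : is_derive x 1 H
    (expR (- (q * x + x ^+ 2 / 8)) * (q * expR x - (q + x / 4) * (1 - q + q * expR x))).
  apply: is_derive_eq; rewrite ![_%:A]mulr1 !scaler0 !add0r mul1r -![_ *: _]/(_ * _).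
  by field; rewrite ?pnatr_eq0.
suff : H h <= H 0.
  rewrite /H expR0 mulr1 mulr0 expr0n /= mul0r addr0 oppr0 expR0 mulr1 subrK expRN.
  by rewrite ler_pdivrMr ?expR_gt0 // mul1r.
apply: (@ler0_derive1_nincry R H 0) => //.
- move=> x; rewrite in_itv /= andbT => /ltW x0.
  rewrite derive1E; have [_ ->] := dH x.
  by rewrite pmulr_rle0 ?expR_gt0 // two_point_mgf_deriv_le0.
- by apply: derivable_within_continuous => x _; case: (dH x).
Qed.

Lemma expR_le_chord (l c x : R) : 0 < c -> 0 <= x <= c ->
  expR (l * x) <= 1 - x / c + x / c * expR (l * c).
Proof.
move=> c_gt0 /andP[x0 xc].
have t0 : 0 <= x / c by rewrite divr_ge0 // ltW.
have t1 : x / c <= 1 by rewrite ler_pdivrMr // mul1r.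
have -> : l * x = x / c * (l * c) by field; rewrite gt_eqF.
have := @convex_expR R (Itv01 t0 t1) (l * c) 0.
by rewrite !convRE /= expR0 mulr0 addr0 mulr1 /unstable.onem addrC.
Qed.

Lemma hoeffding_lemma (I : finType) (p x : I -> R) (c l : R) :
  (forall i, 0 <= p i) -> \sum_i p i = 1 ->
  (forall i, 0 < p i -> 0 <= x i <= c) -> 0 <= l ->
  \sum_i p i * expR (l * x i) <= expR (l * (\sum_i p i * x i) + l ^+ 2 * c ^+ 2 / 8).
Proof.
move=> p_ge0 p_sum1 x_supp l_ge0; set mu := \sum_i p i * x i.
have supp i : p i = 0 \/ 0 < p i /\ 0 <= x i <= c.
  move: (p_ge0 i); rewrite le_eqVlt => /predU1P[<-|pi]; first by left.
  by right; split; last exact: x_supp.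
have mu_ge0 : 0 <= mu.
  apply: sumr_ge0 => i _; case: (supp i) => [->|[pi /andP[xi _]]]; first by rewrite mul0r.
  by rewrite mulr_ge0 // ltW.
have mu_le_c : mu <= c.
  rewrite -[c]mul1r -p_sum1 mulr_suml; apply: ler_sum => i _.
  case: (supp i) => [->|[pi /andP[_ xi]]]; first by rewrite !mul0r.
  by rewrite ler_wpM2l // ltW.
have [c_le0|c_gt0] := leP c 0.
  have mu_eq0 : mu = 0 by apply/eqP; rewrite eq_le mu_ge0 andbT; lra.
  have -> : \sum_i p i * expR (l * x i) = 1.
    rewrite -p_sum1; apply: eq_bigr => i _; case: (supp i) => [->|[_ xi]]; first by rewrite !mul0r.
    have -> : x i = 0 by lra.
    by rewrite mulr0 expR0 mulr1.
  rewrite mu_eq0 mulr0 add0r -expR0 ler_expR.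
  by rewrite divr_ge0 // mulr_ge0 // sqr_ge0.
pose E := expR (l * c).
have chord : \sum_i p i * expR (l * x i) <= 1 - mu / c + mu / c * E.
  have -> : 1 - mu / c + mu / c * E = \sum_i (p i + p i * x i * ((E - 1) / c)).
    by rewrite big_split /= -mulr_suml p_sum1 -/mu; field; rewrite gt_eqF.
  apply: ler_sum => i _; case: (supp i) => [->|[pi xi]]; first by rewrite !mul0r add0r.
  have -> : p i + p i * x i * ((E - 1) / c) = p i * (1 - x i / c + x i / c * E).
    by field; rewrite gt_eqF.
  by rewrite ler_wpM2l ?expR_le_chord // ltW.
have -> : l * mu + l ^+ 2 * c ^+ 2 / 8 = mu / c * (l * c) + (l * c) ^+ 2 / 8.
  by field; rewrite gt_eqF.
apply: (le_trans chord); apply: two_point_mgf_le; last by rewrite mulr_ge0 // ltW.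
by rewrite divr_ge0 ?ler_pdivrMr ?mul1r // ltW.
Qed.

End HoeffdingLemma.

Section ProductTail.
Variables (R : realType) (I J : finType) (g X : I -> J -> R).

(* The probability that [\sum_i X i (w i) >= a] when the coordinates [w i] are drawn
   independently, [w i = j] with probability [g i j]. *)
Definition prod_tail (a : R) : R :=
  \sum_(w : {ffun I -> J} | a <= \sum_i X i (w i)) \prod_i g i (w i).

Hypothesis g_ge0 : forall i j, 0 <= g i j.

Lemma chernoff_prod_tail a l : 0 <= l ->
  prod_tail a <= expR (- (l * a)) * \prod_i \sum_j g i j * expR (l * X i j).
Proof.
move=> l_ge0; rewrite /prod_tail big_mkcond /=.
apply: (@le_trans _ _ (\sum_(w : {ffun I -> J})
    (\prod_i g i (w i)) * expR (l * (\sum_i X i (w i) - a)))).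
  apply: ler_sum => w _; have w_ge0 : 0 <= \prod_i g i (w i) by exact: prodr_ge0.
  case: ifP => [le_a|_]; last by rewrite mulr_ge0 ?expR_ge0.
  by rewrite ler_peMr // -expR0 ler_expR mulr_ge0 // subr_ge0.
(* independence: the expectation of [expR (l * \sum_i X i (w i))] factorises *)
rewrite bigA_distr_bigA mulr_sumr le_eqVlt; apply/orP; left; apply/eqP.
apply: eq_bigr => w _; rewrite mulrBr expRB big_split /= -expR_sum -mulr_sumr expRN.
ring.
Qed.

Variable c : I -> R.
Hypothesis X_supp : forall i j, 0 < g i j -> 0 <= X i j <= c i.

Lemma prod_tail_eq0 a : \sum_i c i < a -> prod_tail a = 0.
Proof.
move=> lt_c_a; apply: big1 => w le_a; apply/eqP; apply: contraT => w_neq0.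
have w_pos i : 0 < g i (w i).
  by rewrite lt_def g_ge0 andbT; move: w_neq0 => /prodf_neq0; apply.
suff : \sum_i X i (w i) <= \sum_i c i by lra.
by apply: ler_sum => i _; case/andP: (X_supp (w_pos i)).
Qed.

Hypothesis g_sum1 : forall i, \sum_j g i j = 1.

Lemma hoeffding_prod_tail a t : 0 <= t -> 0 < \sum_i c i ^+ 2 ->
  \sum_i \sum_j g i j * X i j + t <= a ->
  prod_tail a <= expR (- (2 * t ^+ 2 / \sum_i c i ^+ 2)).
Proof.
set C := \sum_i c i ^+ 2; set mu := \sum_i _ => t_ge0 C_gt0 le_a.
(* [l] minimises [- l t + l ^+ 2 * C / 8] *)
pose l := 4 * t / C.
have l_ge0 : 0 <= l by rewrite divr_ge0 ?mulr_ge0 // ltW.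
apply: le_trans (chernoff_prod_tail a l_ge0) _.
apply: (@le_trans _ _ (expR (- (l * a)) *
    \prod_i expR (l * (\sum_j g i j * X i j) + l ^+ 2 * c i ^+ 2 / 8))).
  rewrite ler_wpM2l ?expR_ge0 //; apply: ler_prod => i _.
  rewrite (hoeffding_lemma (g_ge0 i) (g_sum1 i) (@X_supp i) l_ge0) andbT.
  by apply: sumr_ge0 => j _; rewrite mulr_ge0 ?expR_ge0.
rewrite -expR_sum -expRD ler_expR big_split /= -mulr_sumr -mulr_suml -mulr_sumr -/C -/mu.
have : l * (mu + t) <= l * a by rewrite ler_wpM2l.
have -> : 2 * t ^+ 2 / C = l * t - l ^+ 2 * C / 8 by rewrite /l; field; rewrite gt_eqF.
lra.
Qed.

End ProductTail.

Lemma big_option (T : Type) (idx : T) (op : Monoid.com_law idx) (K : finType)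
    (F : option K -> T) :
  \big[op/idx]_(o : option K) F o = op (F None) (\big[op/idx]_(k : K) F (Some k)).
Proof.
rewrite (bigD1 None) //=; congr (op _ _).
by rewrite (reindex_omap Some id) => [|[]//]; apply: eq_bigl => k; rewrite eqxx.
Qed.

Section RequestAllocation.
Variables (R : realType) (VS Ty : finType) (rq : request VS Ty R) (u v : VS).

Lemma is_path_in_sub (F : {set VS * VS}) (s t : VS) (P : {set VS * VS}) e :
  is_path_in F s t P -> e \in P -> e \in F.
Proof.
case: e => a b [p [p_path _ _ ->]]; rewrite inE.
elim: p s p_path => // x p IHp s /= /andP[sx p_path].
by rewrite in_cons => /orP[/eqP[-> ->] // | ab_p]; exact: IHp p_path ab_p.
Qed.

Lemma dmax_ge0 : 0 <= dmax rq u v. Proof. exact: bigmax_ge_id. Qed.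

Lemma Amax_ge0 : 0 <= Amax rq u v. Proof. exact: bigmax_ge_id. Qed.

Lemma le_Amax (m : mapping rq) : valid_mapping m -> alloc_edge m u v <= Amax rq u v.
Proof.
by move=> m_valid; apply: (le_bigmax_cond _ (fun m => alloc_edge m u v)); apply/asboolP.
Qed.

Lemma Amax_dmax0 : dmax rq u v = 0 -> Amax rq u v = 0.
Proof.
move=> dmax0; apply/eqP; rewrite eq_le Amax_ge0 andbT.
apply: bigmax_le => // m /asboolP[_ m_paths].
apply: (@le_trans _ _ (\sum_(p | vedge rq p.1 p.2 && ((u, v) \in m.2 p)) dmax rq u v));
  last by rewrite dmax0 big1.
apply: ler_sum => -[i j] /andP[ij uv].
apply: (le_bigmax_cond _ (fun p : vnode rq * vnode rq => dedge rq p.1 p.2)).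
by rewrite ij (is_path_in_sub (m_paths i j ij) uv).
Qed.

End RequestAllocation.

Lemma sum_Amax_sqr_le (R : realType) (VS Ty Req : finType) (req : Req -> request VS Ty R)
    (u v : VS) (e : R) :
  (forall r, dmax (req r) u v <= e) ->
  \sum_r Amax (req r) u v ^+ 2 <= e ^+ 2 * \sum_r (Amax (req r) u v / dmax (req r) u v) ^+ 2.
Proof.
move=> dmax_le; rewrite mulr_sumr; apply: ler_sum => r _.
(* [Amax / 0 = 0] is harmless: [dmax = 0] forces [Amax = 0]. *)
have [dmax0|dmax_neq0] := eqVneq (dmax (req r) u v) 0.
  by rewrite Amax_dmax0 // expr0n /= mulr_ge0 ?sqr_ge0.
set A := Amax _ u v; set D := dmax _ u v in dmax_neq0 *.
rewrite -{1}(divfK dmax_neq0 A) exprMn [leRHS]mulrC ler_wpM2l ?sqr_ge0 //.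
have D_ge0 : 0 <= D := dmax_ge0 _ _ _.
by rewrite ler_sqr ?nnegrE ?(le_trans D_ge0 (dmax_le r)) ?dmax_le.
Qed.

Section Rounding.
Variables (R : realType) (VS Ty Req K : finType) (req : Req -> request VS Ty R).
Variables (Kr : Req -> {set K}) (f : Req -> K -> R) (m : forall r, K -> mapping (req r)).
Variables u v : VS.

(* The rounding for request [r] as a distribution on [option K], [None] meaning that no
   mapping is selected. *)
Definition rounding_weight r (o : option K) : R :=
  match o with
  | Some k => if k \in Kr r then f r k else 0
  | None => 1 - \sum_(k in Kr r) f r k
  end.

Definition rounding_alloc r (o : option K) : R :=
  match o with Some k => alloc_edge (m r k) u v | None => 0 end.

Lemma rounding_tailE a :
  \sum_(w : {ffun Req -> option K} | a <= rounded_alloc m w u v) outcome_weight Kr f w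
  = prod_tail rounding_weight rounding_alloc a.
Proof. by []. Qed.

Hypothesis dedge_ge0 : forall r i j, 0 <= dedge (req r) i j.
Hypothesis f_pos_valid : forall r k, k \in Kr r -> 0 < f r k /\ valid_mapping (m r k).
Hypothesis f_sum_le1 : forall r, \sum_(k in Kr r) f r k <= 1.

Lemma rounding_weight_ge0 r o : 0 <= rounding_weight r o.
Proof.
case: o => [k|] /=; last by rewrite subr_ge0.
by case: ifP => // /f_pos_valid[/ltW].
Qed.

Lemma rounding_weight_sum1 r : \sum_o rounding_weight r o = 1.
Proof. by rewrite big_option /= -big_mkcond subrK. Qed.

Lemma rounding_alloc_supp r o :
  0 < rounding_weight r o -> 0 <= rounding_alloc r o <= Amax (req r) u v.
Proof.
case: o => [k|] /=; last by rewrite lexx Amax_ge0.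
case: ifP => [/f_pos_valid[_ m_valid] _|]; last by rewrite ltxx.
by rewrite le_Amax // andbT sumr_ge0 // => p _; exact: dedge_ge0.
Qed.

Lemma rounding_alloc_mean r :
  \sum_o rounding_weight r o * rounding_alloc r o
  = \sum_(k in Kr r) f r k * alloc_edge (m r k) u v.
Proof.
rewrite big_option /= mulr0 add0r [RHS]big_mkcond /=.
by apply: eq_bigr => k _; case: ifP; rewrite ?mul0r.
Qed.

Lemma rounding_tail_le (d t s : R) : 0 < d -> 0 <= t ->
  \sum_r \sum_(k in Kr r) f r k * alloc_edge (m r k) u v <= d ->
  2 * s * \sum_r Amax (req r) u v ^+ 2 <= t ^+ 2 ->
  prod_tail rounding_weight rounding_alloc (d + t) <= expR (- (4 * s)).
Proof.
set C := \sum_r Amax _ u v ^+ 2 => d_gt0 t_ge0 load_le Cs_le.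
have supp := rounding_alloc_supp; have w_ge0 := rounding_weight_ge0.
have C_ge0 : 0 <= C by apply: sumr_ge0 => r _; exact: sqr_ge0.
move: C_ge0; rewrite le_eqVlt => /predU1P[C0|C_gt0].
- have Amax0 r : Amax (req r) u v = 0.
    apply/eqP; rewrite -sqrf_eq0; apply/eqP.
    by apply: (psumr_eq0P _ (esym C0)) => // r' _; exact: sqr_ge0.
  rewrite (prod_tail_eq0 w_ge0 supp) ?expR_ge0 //.
  by rewrite (eq_bigr _ (fun r _ => Amax0 r)) big1 //; lra.
- apply: le_trans (hoeffding_prod_tail w_ge0 supp _ t_ge0 C_gt0 _) _.
  + exact: rounding_weight_sum1.
  + by rewrite lerD2r; under eq_bigr do rewrite rounding_alloc_mean.
  by rewrite ler_expR lerN2 ler_pdivlMr // -/C; lra.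
Qed.

End Rounding.

Theorem lemma23
  (R : realType) (VS Ty : finType) (ES : rel VS) (VT : Ty -> {set VS})
  (dSV : Ty -> VS -> R) (dSE : VS -> VS -> R)
  (Req : finType) (req : Req -> request VS Ty R)
  (K : finType) (Kr : Req -> {set K}) (f : Req -> K -> R)
  (m : forall r, K -> mapping (req r))
  (u v : VS) (eps : R) :
  (forall tau x, x \in VT tau -> 0 < dSV tau x) ->
  (forall a b, ES a b -> 0 < dSE a b) ->
  (forall r, wf_request VT ES (req r)) ->
  (forall r k, k \in Kr r -> 0 < f r k /\ valid_mapping (m r k)) ->
  (forall r, \sum_(k in Kr r) f r k <= 1) ->
  (forall a b, ES a b ->
     \sum_(r : Req) \sum_(k in Kr r) f r k * alloc_edge (m r k) a b <= dSE a b) ->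
  (forall tau x, x \in VT tau ->
     \sum_(r : Req) \sum_(k in Kr r) f r k * alloc_node (m r k) tau x <= dSV tau x) ->
  ES u v ->
  0 < eps -> eps <= 1 ->
  (forall r, dmax (req r) u v / dSE u v <= eps) ->
  let Delta := \sum_(r : Req) (Amax (req r) u v / dmax (req r) u v) ^+ 2 in
  let gamma := 1 + eps * Num.sqrt (2 * Delta * ln (#|VS|%:R)) in
  \sum_(w : {ffun Req -> option K} | gamma * dSE u v <= rounded_alloc m w u v)
     outcome_weight Kr f w
  <= (#|VS|%:R) ^- 4.
Proof.
move=> _ dSE_gt0 wf f_pos_valid f_sum_le1 cap_edge _ uv eps_gt0 _ dmax_le /=.
set Delta := \sum_r (_ / _) ^+ 2; set gamma := 1 + _.
have dedge_ge0 r i j : 0 <= dedge (req r) i j by case: (wf r).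
set d := dSE u v; have d_gt0 : 0 < d := dSE_gt0 u v uv.
set n : R := #|VS|%:R; have n_ge1 : 1 <= n by rewrite ler1n; apply/card_gt0P; exists u.
have lnn_ge0 : 0 <= ln n by rewrite ln_ge0.
have Delta_ge0 : 0 <= Delta by apply: sumr_ge0 => r _; exact: sqr_ge0.
set t := eps * Num.sqrt (2 * Delta * ln n) * d.
have -> : gamma * d = d + t by rewrite mulrDl mul1r.
have -> : n ^- 4 = expR (- (4 * ln n)) by rewrite expRN expRM_natl lnK // posrE; lra.
rewrite rounding_tailE; apply: (rounding_tail_le dedge_ge0 f_pos_valid f_sum_le1 d_gt0).
- by rewrite !mulr_ge0 ?sqrtr_ge0 // ltW.
- exact: cap_edge.
have t2 : t ^+ 2 = (eps * d) ^+ 2 * (2 * Delta * ln n).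
  by rewrite !exprMn sqr_sqrtr ?mulr_ge0 //; ring.
have C_le : \sum_r Amax (req r) u v ^+ 2 <= (eps * d) ^+ 2 * Delta.
  by apply: sum_Amax_sqr_le => r; rewrite -ler_pdivrMr.
have := ler_wpM2l (mulr_ge0 (ler0n _ 2) lnn_ge0) C_le; rewrite t2; lra.
Qed.
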